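(* For each $n\geq2$, the pseudovariety $\llbracket N_n\rrbracket$ is join irreducible and $\operatorname{Excl}(N_n)=\llbracket x^{\omega+n-1}\approx x^{n-1}\rrbracket$.
   Context: $N_n=\langle a\mid a^n=0\rangle=\{0,a,\dots,a^{n-1}\}$ is the monogenic nilpotent semigroup of order $n$. A pseudovariety is a class of finite semigroups closed under finite direct products, subsemigroups and homomorphic images; $\llbracket S\rrbracket$ is the pseudovariety generated by $S$ and $\llbracket\Sigma\rrbracket$ the pseudovariety defined by pseudoidentities $\Sigma$; $x^\omega$ is the idempotent power and $x^{\omega+k}=x^\omega x^k$. A pseudovariety $\mathbf{V}$ is join irreducible if for every set $\mathscr{X}$ of pseudovarieties, $\mathbf{V}\subseteq\bigvee\mathscr{X}$ implies $\mathbf{V}\subseteq\mathbf{X}$ for some $\mathbf{X}\in\mathscr{X}$; $\operatorname{Excl}(S)$ is the class of finite semigroups $T$ with $S\notin\llbracket T\rrbracket$. *)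

From HB Require Import structures.
From mathcomp Require Import all_boot zify.
Set Implicit Arguments.
Unset Strict Implicit.
Unset Printing Implicit Defensive.

Record fsg : Type := FSG {
  fsg_car :> finType;
  fsg_op : fsg_car -> fsg_car -> fsg_car;
  fsg_assoc : associative fsg_op }.

Definition hom (S T : fsg) (f : S -> T) : Prop :=
  forall x y : S, f (fsg_op x y) = fsg_op (f x) (f y).

(* positive powers: spow x k = x^k for k >= 1 *)
Definition spow (S : fsg) (x : S) (k : nat) : S := iter k.-1 (fsg_op x) x.

Definition prod_op (S T : fsg) (p q : (S * T)%type) : (S * T)%type :=
  (fsg_op p.1 q.1, fsg_op p.2 q.2).
Lemma prod_op_assoc (S T : fsg) : associative (@prod_op S T).
Proof. by move=> [a b] [c d] [e f]; rewrite /prod_op /= !fsg_assoc. Qed.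
Definition prod_fsg (S T : fsg) : fsg := @FSG (S * T)%type _ (@prod_op_assoc S T).

(* the trivial semigroup (empty direct product) *)
Definition unit_op (x y : unit) : unit := tt.
Lemma unit_op_assoc : associative unit_op. Proof. by []. Qed.
Definition unit_fsg : fsg := @FSG unit _ unit_op_assoc.

Definition class := fsg -> Prop.
Definition subclass (V W : class) : Prop := forall S, V S -> W S.

(* pseudovariety: closed under finite direct products (nullary and binary),
   subsemigroups (injective homomorphisms) and homomorphic images
   (surjective homomorphisms). *)
Definition pseudovariety (V : class) : Prop :=
  [/\ V unit_fsg,
      (forall S T : fsg, V S -> V T -> V (prod_fsg S T)),
      (forall (S T : fsg) (f : T -> S), hom f -> injective f -> V S -> V T) &
      (forall (S T : fsg) (f : S -> T), hom f -> (forall y, exists x, f x = y) ->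
          V S -> V T)].

Definition gen (S : fsg) : class :=
  fun T => forall V, pseudovariety V -> V S -> V T.

Definition join (X : class -> Prop) : class :=
  fun T => forall V, pseudovariety V ->
    (forall W, X W -> subclass W V) -> V T.

Definition join_irreducible (V : class) : Prop :=
  forall X : class -> Prop, (forall W, X W -> pseudovariety W) ->
    subclass V (join X) -> exists2 W, X W & subclass V W.

Definition Excl (S : fsg) : class := fun T => ~ gen T S.

(* [[ x^{w+k} = x^k ]] : x^w is the (unique) idempotent positive power of x *)
Definition omega_plus_eq (k : nat) : class :=
  fun T => forall x e : T, (exists2 m, 0 < m & e = spow x m) ->
    fsg_op e e = e -> fsg_op e (spow x k) = spow x k.

(* N_n = <a | a^n = 0> = {a, a^2, ..., a^{n-1}, 0}; the element i : 'I_n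
   represents a^(i+1), and i = n-1 represents a^n = 0. *)
Lemma N_op_lt n (i : 'I_n) (m : nat) : minn m n.-1 < n.
Proof. have := ltn_ord i; lia. Qed.
Definition N_op n (i j : 'I_n) : 'I_n := Ordinal (N_op_lt i (i + j).+1).
Lemma N_op_assoc n : associative (@N_op n).
Proof. move=> i j k; apply: val_inj => /=; lia. Qed.
Definition N (n : nat) : fsg := @FSG 'I_n _ (@N_op_assoc n).

(* An element x with idempotent power x^w satisfies x^(w+n-1) = x^(n-1)
   unless its first n-1 powers x, ..., x^(n-1) occur only once in the
   sequence of its powers; in that case collapsing all higher powers to a
   zero maps the monogenic subsemigroup generated by x onto N_n.  Hence
   N_n lies in [[T]] exactly when T violates the pseudoidentity, so
   Excl(N_n) is the pseudovariety it defines.  A pseudovariety V = Excl(S)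
   makes [[S]] join irreducible: if S lies in no member of a family of
   pseudovarieties, every member is contained in V, hence so is their join,
   while S is not in V. *)
From mathcomp Require Import all_boot zify.
From Stdlib Require Import Classical.

Set Implicit Arguments.
Unset Strict Implicit.
Unset Printing Implicit Defensive.

Lemma gen_divisor (T U S : fsg) (i : U -> T) (f : U -> S) :
  hom i -> injective i -> hom f -> (forall y, exists x, f x = y) -> gen T S.
Proof.
move=> ihom iinj fhom fsurj V [_ _ Vsub Vimg] VT.
exact: Vimg _ _ f fhom fsurj (Vsub _ _ i ihom iinj VT).
Qed.

Lemma join_irreducible_gen (S : fsg) (V : class) :
  pseudovariety V -> subclass (Excl S) V -> ~ V S -> join_irreducible (gen S).
Proof.
move=> pV ExclV notVS X Xpv genX; apply: NNPP => noW; apply: notVS.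
have WV W : X W -> subclass W V.
  move=> XW T WT; apply: ExclV => genTS; apply: noW; exists W => // R genSR.
  exact: genSR _ (Xpv W XW) (genTS _ (Xpv W XW) WT).
exact: genX S (fun _ _ => id) V pV WV.
Qed.

Lemma Excl_iff (S : fsg) (V : class) :
  pseudovariety V -> ~ V S -> (forall T, ~ V T -> gen T S) ->
  forall T, Excl S T <-> V T.
Proof.
move=> pV notVS genS T; split => [notgen | VT genTS].
  by apply: NNPP => notVT; apply: notgen (genS T notVT).
exact: notVS (genTS V pV VT).
Qed.

Section Subsemigroup.

Variables (T : fsg) (P : pred T).
Hypothesis P_op : forall y z, P y -> P z -> P (fsg_op y z).

Definition sub_op (u v : {y : T | P y}) : {y : T | P y} :=
  exist _ (fsg_op (val u) (val v)) (P_op (valP u) (valP v)).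

Lemma sub_op_assoc : associative sub_op.
Proof. by move=> u v w; apply: val_inj; apply: fsg_assoc. Qed.

Definition sub_fsg : fsg := FSG sub_op_assoc.

Lemma val_hom : hom (val : sub_fsg -> T).
Proof. by []. Qed.

End Subsemigroup.

(* [powS x k] is x^(k+1); in particular [spow x k.+1] is [powS x k]. *)
Definition powS (S : fsg) (x : S) (k : nat) : S := iter k (fsg_op x) x.

Section Powers.

Variable S : fsg.
Implicit Types (x e : S) (a b c j k : nat).

Lemma powSD x a b : fsg_op (powS x a) (powS x b) = powS x (a + b).+1.
Proof. by elim: a => [|a IHa] //=; rewrite -fsg_assoc IHa. Qed.

Lemma powS_powS x a b : powS (powS x a) b = powS x (a.+1 * b.+1).-1.
Proof.
elim: b => [|b IHb]; first by rewrite muln1.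
by rewrite [LHS]/= -/(powS _ b) IHb powSD; congr (powS x _); nia.
Qed.

Lemma powS_idem e b : fsg_op e e = e -> powS e b = e.
Proof. by move=> ee; elim: b => //= b ->. Qed.

Lemma powS_period x j d :
  powS x (j + d) = powS x j -> forall l t, j <= l -> powS x (l + t * d) = powS x l.
Proof.
move=> per l t le_jl.
have per_t : powS x (j + t * d) = powS x j.
  elim: t => [|t IHt]; first by rewrite mul0n addn0.
  rewrite mulSn addnCA [LHS]iterD -/(powS x (j + t * d)) IHt -iterD addnC.
  exact: per.
rewrite -(subnK le_jl) -addnA [LHS]iterD -/(powS x (j + t * d)) per_t.
by rewrite /powS iterD.
Qed.

Lemma powS_eventually_periodic x : exists j d, 0 < d /\ powS x (j + d) = powS x j.
Proof.
have /trajectP[j lt_j loop] := looping_order (fsg_op x) x.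
exists j, (order (fsg_op x) x - j); split; first by rewrite subn_gt0.
by rewrite (subnKC (ltnW lt_j)).
Qed.

Lemma idem_powS_exists x : exists a, fsg_op (powS x a) (powS x a) = powS x a.
Proof.
have [j [d [d_gt0 per]]] := powS_eventually_periodic x.
exists (j.+1 * d).-1; rewrite powSD.
have -> : ((j.+1 * d).-1 + (j.+1 * d).-1).+1 = (j.+1 * d).-1 + j.+1 * d by nia.
by apply: powS_period per _ _ _; nia.
Qed.

Lemma idem_powS_unique x a b :
  fsg_op (powS x a) (powS x a) = powS x a ->
  fsg_op (powS x b) (powS x b) = powS x b -> powS x a = powS x b.
Proof.
move=> idem_a idem_b.
by rewrite -(powS_idem b idem_a) -(powS_idem a idem_b) !powS_powS mulnC.
Qed.

(* The idempotent power e = x^(a+1) equals x^((a+1)d), a multiple of the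
   period d, so multiplying by it does not change any power past the index j. *)
Lemma idem_powS_absorb x a j d k :
  0 < d -> powS x (j + d) = powS x j -> j <= k ->
  fsg_op (powS x a) (powS x a) = powS x a ->
  fsg_op (powS x a) (powS x k) = powS x k.
Proof.
move=> d_gt0 per le_jk idem_a.
rewrite -(powS_idem d.-1 idem_a) powS_powS powSD prednK //.
have -> : ((a.+1 * d).-1 + k).+1 = k + a.+1 * d by nia.
exact: powS_period per _ _ le_jk.
Qed.

Lemma powS_isolated x a k :
  fsg_op (powS x a) (powS x a) = powS x a ->
  fsg_op (powS x a) (powS x k) <> powS x k ->
  forall j c, j <= k -> powS x j = powS x c -> c = j.
Proof.
move=> idem_a not_absorbed j c le_jk E.
case: (ltngtP j c) => [lt_jc | lt_cj | //]; case: not_absorbed.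
  apply: (idem_powS_absorb (j := j) (d := c - j)) le_jk idem_a.
    by rewrite subn_gt0.
  by rewrite (subnKC (ltnW lt_jc)).
apply: (idem_powS_absorb (j := c) (d := j - c)) _ idem_a.
- by rewrite subn_gt0.
- by rewrite (subnKC (ltnW lt_cj)).
- exact: leq_trans (ltnW lt_cj) le_jk.
Qed.

End Powers.

Lemma powS_hom (S T : fsg) (f : S -> T) (x : S) k : hom f -> f (powS x k) = powS (f x) k.
Proof. by move=> fhom; elim: k => //= k IHk; rewrite fhom IHk. Qed.

Lemma powS_prod (S T : fsg) (x : prod_fsg S T) k : powS x k = (powS x.1 k, powS x.2 k).
Proof. by elim: k => [|k IHk] /=; [case: x | rewrite IHk]. Qed.

Lemma omega_plus_eqP k (T : fsg) :
  omega_plus_eq k T <->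
  (forall (x : T) a, fsg_op (powS x a) (powS x a) = powS x a ->
     fsg_op (powS x a) (powS x k.-1) = powS x k.-1).
Proof.
split=> [Tk x a idem_a | Tk x e [[|m] // _ ->]]; last exact: Tk.
exact: Tk x _ (ex_intro2 _ _ a.+1 erefl erefl) idem_a.
Qed.

Lemma omega_pseudovariety k : pseudovariety (omega_plus_eq k).
Proof.
split.
- by move=> x e _ _; case: (fsg_op _ _); case: (spow _ _).
- move=> S T /omega_plus_eqP S_k /omega_plus_eqP T_k; apply/omega_plus_eqP.
  move=> x a; rewrite !powS_prod => -[/S_k S_abs /T_k T_abs].
  by rewrite /= /prod_op /= S_abs T_abs.
- move=> S T f fhom finj /omega_plus_eqP S_k; apply/omega_plus_eqP.
  move=> x a idem_a; apply: finj; rewrite fhom !(powS_hom _ _ fhom).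
  by apply: S_k; rewrite -!(powS_hom _ _ fhom) -fhom idem_a.
- move=> S T f fhom fsurj /omega_plus_eqP S_k; apply/omega_plus_eqP.
  move=> y a; have [x <-] := fsurj y; move=> idem_a.
  have [b idem_b] := idem_powS_exists x.
  have := congr1 f (S_k x b idem_b); have := congr1 f idem_b.
  rewrite fhom !(powS_hom _ _ fhom) => idem_fb.
  by rewrite fhom !(powS_hom _ _ fhom) (idem_powS_unique idem_a idem_fb).
Qed.

Lemma N_powS m c : val (powS (ord0 : N m.+1) c) = minn c m.
Proof. by elim: c => [|c IHc] /=; [lia | rewrite IHc; lia]. Qed.

Lemma N_not_omega k : ~ omega_plus_eq k.+1 (N k.+2).
Proof.
move=> /omega_plus_eqP /(_ ord0 k.+1) absorbs.
pose z := powS (ord0 : N k.+2) k.+1.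
have zero_idem : fsg_op z z = z.
  by apply: val_inj; rewrite /= !N_powS; lia.
by have := congr1 val (absorbs zero_idem); rewrite /= !N_powS; lia.
Qed.

Section MonogenicQuotient.

Variables (T : fsg) (x : T) (m : nat).

Lemma fconnect_powS c : fconnect (fsg_op x) x (powS x c).
Proof. exact: fconnect_iter. Qed.

Lemma fconnect_op y z :
  fconnect (fsg_op x) x y -> fconnect (fsg_op x) x z ->
  fconnect (fsg_op x) x (fsg_op y z).
Proof.
move=> /iter_findex <- /iter_findex <-.
by rewrite -/(powS x _) -/(powS x _) powSD fconnect_powS.
Qed.

Definition monogenic_fsg : fsg := sub_fsg fconnect_op.

(* [findex] recovers an exponent of [u] as a power of [x]; all powers beyond
   x^m are sent to the zero of N_(m+1). *)
Definition collapse (u : monogenic_fsg) : N m.+1 :=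
  inord (minn (findex (fsg_op x) x (val u)) m).

Lemma powS_findex (u : monogenic_fsg) : val u = powS x (findex (fsg_op x) x (val u)).
Proof. exact/esym/iter_findex/(valP u). Qed.

Hypothesis isolated : forall j c, j < m -> powS x j = powS x c -> c = j.

Lemma collapse_powS c (u : monogenic_fsg) : val u = powS x c -> collapse u = minn c m :> nat.
Proof.
move=> Eu; rewrite /collapse inordK ?ltnS ?geq_minr //.
have E : powS x (findex (fsg_op x) x (val u)) = powS x c by rewrite -Eu -powS_findex.
case: (ltnP c m) => [lt_cm | le_mc]; first by rewrite (isolated lt_cm (esym E)); lia.
case: (ltnP (findex (fsg_op x) x (val u)) m) => [lt_fm | //].
by have := isolated lt_fm E; lia.
Qed.

Lemma collapse_hom : hom collapse.
Proof.
move=> u v; have Eu := powS_findex u; have Ev := powS_findex v.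
move: (findex (fsg_op x) x (val u)) (findex (fsg_op x) x (val v)) Eu Ev => a b Eu Ev.
apply: val_inj => /=; rewrite (collapse_powS (c := (a + b).+1)).
  by rewrite (collapse_powS Eu) (collapse_powS Ev); lia.
by rewrite -powSD -Eu -Ev.
Qed.

Lemma collapse_surj (i : N m.+1) : exists u, collapse u = i.
Proof.
exists (exist _ (powS x i) (fconnect_powS i)); apply: val_inj => /=.
by rewrite (collapse_powS (c := i)) //; have := ltn_ord i; lia.
Qed.

Lemma gen_N_of_isolated : gen T (N m.+1).
Proof.
exact: (gen_divisor (@val_hom _ _ fconnect_op) val_inj collapse_hom collapse_surj).
Qed.

End MonogenicQuotient.

Lemma gen_N_of_not_omega k (T : fsg) : ~ omega_plus_eq k.+1 T -> gen T (N k.+2).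
Proof.
move=> notT; apply: NNPP => notgen; apply: notT; apply/omega_plus_eqP => x a idem_a.
apply: NNPP => not_absorbed; apply: notgen; apply: (gen_N_of_isolated (x := x)).
exact: powS_isolated idem_a not_absorbed.
Qed.

Theorem theorem5p7 (n : nat) : 2 <= n ->
  join_irreducible (gen (N n)) /\
  (forall T : fsg, Excl (N n) T <-> omega_plus_eq (n - 1) T).
Proof.
case: n => [|[|k]] // _; rewrite subn1 /=.
have omega_pv := omega_pseudovariety k.+1.
have ExclE := Excl_iff omega_pv (@N_not_omega k) (@gen_N_of_not_omega k).
split=> //; apply: join_irreducible_gen omega_pv _ (@N_not_omega k).
by move=> T /ExclE.
Qed.
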